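(* Let $G=(V,E)$ be a finite simple undirected graph, with a (possibly empty) set of boundary vertices $\partial G\subseteq V$, each boundary vertex having degree exactly one. Let $\mathring V=V\setminus\partial G$ and let $\mathring E$ be the set of edges with both endpoints in $\mathring V$. Give each edge $e$ an arbitrary orientation $e=(u,v)$ and a coordinate $x_e\in[0,1]$ with $x_e=0$ at $u$ and $x_e=1$ at $v$; for a vertex $v$ incident to $e$ write $x_{e,v}\in\{0,1\}$ for the value of $x_e$ at $v$. Let $f$ be a real function on the geometric realization (unit-length edges) such that for each edge $e$ there are real constants $C(e),B(e)$ with $f(e,x_e)=C(e)\cos(B(e)+\pi x_e)$ for $x_e\in[0,1]$, such that $f$ vanishes at every vertex (i.e. $f(e,x_{e,v})=0$ for every edge $e$ and endpoint $v$), and such that $f$ is edge-based, i.e. for every vertex $v\in V$ $$\sum_{e\ni v}(-1)^{1-x_{e,v}}\frac{\partial f}{\partial x_e}(e,x_{e,v})=0.$$ Then $f$ vanishes identically on every edge not in $\mathring E$, and for each $e\in\mathring E$ there is a real constant $D(e)$ with $f(e,x_e)=D(e)\cos(\tfrac{\pi}{2}+\pi x_e)$, where $$\sum_{e\ni v,\ e\in\mathring E}D(e)=0\quad\text{for all } v\in\mathring V.$$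
   Context: The factor $(-1)^{1-x_{e,v}}$ turns the derivative along $x_e$ into the outward-pointing derivative at $v$; the edge-based condition says the outward derivatives of $f$ at each vertex sum to zero (the vertex-based Laplacian of $f$ vanishes). Such $f$ are the eigenfunctions of the edge-based Laplacian $\Delta_E f=-f''$ with frequency $\omega=\pi$ (eigenvalue $\pi^2$) that are zero on the vertices. *)

From HB Require Import structures.
From mathcomp Require Import all_boot all_order all_algebra.
From mathcomp Require Import all_classical all_reals all_analysis.
Set Implicit Arguments. Unset Strict Implicit. Unset Printing Implicit Defensive.
Import Order.TTheory GRing.Theory Num.Theory.
Local Open Scope ring_scope.

(* A graph with vertex type V and edge type E; each edge e is oriented
   e = (src e, tgt e). *)

Definition incident (V E : finType) (src tgt : E -> V) (e : E) (v : V) : bool :=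
  (src e == v) || (tgt e == v).

Definition simple_graph (V E : finType) (src tgt : E -> V) : Prop :=
  (forall e, src e != tgt e) /\
  (forall e1 e2, [set src e1; tgt e1] = [set src e2; tgt e2] -> e1 = e2).

Definition degree (V E : finType) (src tgt : E -> V) (v : V) : nat :=
  #|[set e | incident src tgt e v]|.

Definition xev (V E : finType) (src : E -> V) (e : E) (v : V) : nat :=
  if src e == v then 0%N else 1%N.

Definition interior_edge (V E : finType) (src tgt : E -> V) (bd : {set V})
  (e : E) : bool := (src e \notin bd) && (tgt e \notin bd).

Definition cosfun (R : realType) (C B : R) : R -> R :=
  fun x => C * cos (B + pi * x).

(* On each edge, vanishing at [x = 0] forces [C cos B = 0], so [f] is a
   multiple [D(e) = C sin B] of [cos (pi/2 + pi x) = - sin (pi x)].  Both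
   outward derivatives of such a function equal [pi D(e)], hence the
   edge-based condition at [v] says that the [D(e)] of the edges at [v] sum
   to zero.  At a boundary vertex this sum has a single term, which kills
   every edge touching the boundary. *)

From HB Require Import structures.
From mathcomp Require Import all_boot all_order all_algebra.
From mathcomp Require Import all_classical all_reals all_analysis.
From mathcomp Require Import ring.
Import Order.TTheory GRing.Theory Num.Theory.
Local Open Scope ring_scope.

Section CosineProfile.
Variable R : realType.
Implicit Types C B x : R.

Lemma is_derive_cosfun C B x :
  is_derive x 1 (cosfun C B) (- (C * (pi * sin (B + pi * x)))).
Proof.
have affine : is_derive x 1 (fun y : R => B + pi * y) pi.
  have := is_deriveD (is_derive_cst B x 1) (is_deriveZ pi (is_derive_id x 1)).
  by rewrite add0r /GRing.scale /= mulr1.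
have -> : - (C * (pi * sin (B + pi * x))) = C * (- sin (B + pi * x) * pi).
  by rewrite mulNr mulrN (mulrC pi).
have := is_deriveZ C
  (@is_derive1_comp R cos _ x _ _ (is_derive_cos (B + pi * x)) affine).
exact.
Qed.

Lemma derive1_cosfun C B x :
  derive1 (cosfun C B) x = - (C * (pi * sin (B + pi * x))).
Proof. by rewrite derive1E; case: (is_derive_cosfun C B x). Qed.

Lemma cosfun0 C B : cosfun C B 0 = C * cos B.
Proof. by rewrite /cosfun mulr0 addr0. Qed.

Lemma cosfun_sin_profile C B x : C * cos B = 0 ->
  cosfun C B x = C * sin B * cos (pi / 2 + pi * x).
Proof.
move=> CcosB0; rewrite /cosfun (addrC (pi / 2)) cosDpihalf cosD mulrBr mulrA.
by rewrite CcosB0 mul0r sub0r mulrN mulrA.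
Qed.

(* Both outward derivatives coincide because [sin (B + pi) = - sin B]. *)
Lemma outward_derive1_cosfun C B (k : nat) : (k <= 1)%N ->
  (-1) ^+ (1 - k) * derive1 (cosfun C B) k%:R = pi * (C * sin B).
Proof.
case: k => [|[|//]] _; rewrite derive1_cosfun.
  by rewrite expr1 mulr0 addr0; ring.
by rewrite expr0 mul1r mulr1 sinDpi; ring.
Qed.

End CosineProfile.

Section Graph.
Context {M : nmodType} {V E : finType} {src tgt : E -> V}.
Lemma incident_src e : incident src tgt e (src e).
Proof. by rewrite /incident eqxx. Qed.

Lemma incident_tgt e : incident src tgt e (tgt e).
Proof. by rewrite /incident eqxx orbT. Qed.

Lemma xev_src e : xev src e (src e) = 0%N.
Proof. by rewrite /xev eqxx. Qed.

Lemma xev_le1 e v : (xev src e v <= 1)%N.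
Proof. by rewrite /xev; case: ifP. Qed.

Lemma big_incident_degree1 (F : E -> M) {v e} :
  degree src tgt v = 1%N -> incident src tgt e v ->
  \sum_(e' | incident src tgt e' v) F e' = F e.
Proof.
rewrite /degree => /eqP/cards1P [a incE] inc_ev.
have incP e' : incident src tgt e' v = (e' == a).
  by have := congr1 (fun S : {set E} => e' \in S) incE; rewrite !inE.
by move: inc_ev; rewrite incP => /eqP->; rewrite (eq_bigl _ _ incP) big_pred1_eq.
Qed.

Context {bd : {set V}}.
Hypothesis bd_degree1 : forall v, v \in bd -> degree src tgt v = 1%N.

Lemma non_interior_edge_eq0 {D : E -> M} :
  (forall v, \sum_(e | incident src tgt e v) D e = 0) ->
  forall e, ~~ interior_edge src tgt bd e -> D e = 0.
Proof.
move=> Dsum0 e.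
have at_bd v : v \in bd -> incident src tgt e v -> D e = 0.
  move=> v_bd inc_ev.
  by rewrite -(Dsum0 v) (big_incident_degree1 D (bd_degree1 v v_bd) inc_ev).
rewrite /interior_edge negb_and !negbK.
by case/orP=> end_bd; apply: at_bd end_bd _; rewrite ?incident_src ?incident_tgt.
Qed.

Lemma big_incident_interior (D : E -> M) v :
  (forall v, \sum_(e | incident src tgt e v) D e = 0) ->
  \sum_(e | incident src tgt e v && interior_edge src tgt bd e) D e = 0.
Proof.
move=> Dsum0; rewrite -[RHS](Dsum0 v) [RHS](bigID (interior_edge src tgt bd)) /=.
by rewrite [X in _ = _ + X]big1 ?addr0 // => e /andP [_ /(non_interior_edge_eq0 Dsum0) ->].
Qed.

End Graph.

Theorem mainTheorem2 (R : realType) (V E : finType) (src tgt : E -> V)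
  (bd : {set V}) (f : E -> R -> R) (C B : E -> R) :
  simple_graph src tgt ->
  (forall v, v \in bd -> degree src tgt v = 1%N) ->
  (forall e x, 0 <= x <= 1 -> f e x = cosfun (C e) (B e) x) ->
  (forall e v, incident src tgt e v -> f e (xev src e v)%:R = 0) ->
  (forall v, \sum_(e | incident src tgt e v)
       (-1) ^+ (1 - xev src e v) *
         derive1 (cosfun (C e) (B e)) (xev src e v)%:R = 0) ->
  (forall e, ~~ interior_edge src tgt bd e ->
       forall x, 0 <= x <= 1 -> f e x = 0) /\
  exists D : E -> R,
    (forall e, interior_edge src tgt bd e ->
       forall x, 0 <= x <= 1 -> f e x = D e * cos (pi / 2 + pi * x)) /\
    (forall v, v \notin bd ->
       \sum_(e | incident src tgt e v && interior_edge src tgt bd e) D e = 0).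
Proof.
move=> _ bd_degree1 f_cos f_vertex0 edge_based.
pose D e := C e * sin (B e).
have CcosB0 e : C e * cos (B e) = 0.
  have := f_vertex0 e _ (incident_src e).
  by rewrite xev_src f_cos ?lexx ?ler01 // cosfun0.
have f_profile e x : 0 <= x <= 1 -> f e x = D e * cos (pi / 2 + pi * x).
  by move=> x01; rewrite f_cos // cosfun_sin_profile.
have Dsum0 v : \sum_(e | incident src tgt e v) D e = 0.
  apply/(mulfI (lt0r_neq0 (pi_gt0 R))); rewrite mulr0 -[RHS](edge_based v) mulr_sumr.
  by apply: eq_bigr => e _; rewrite outward_derive1_cosfun // xev_le1.
split=> [e e_bd x x01|].
  by rewrite f_profile // (non_interior_edge_eq0 bd_degree1 Dsum0 e e_bd) mul0r.
exists D; split=> [e _|v _]; first exact: f_profile.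
exact: big_incident_interior bd_degree1 D v Dsum0.
Qed.
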